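(* Fix $\alpha\in(0,1)$, let $p=\frac{\alpha}{1+\alpha}$, and condition on $(\xi,|\widetilde\beta|)$ such that $\eta_{(1)}<-\log\alpha$. Let $q_1=\frac{1}{1+e^{\eta_{(1)}}}$. Then, conditionally, the number of rejections $R$ of any knockoff procedure at level $\alpha$ is stochastically smaller than $M_d^{p,q_1}$.
   Context: Whitening setup: $\Sigma\in\mathbb R^{d\times d}$ symmetric positive definite, $\beta\in\mathbb R^d$, $\sigma^2>0$, $\widehat\beta\sim\mathcal N_d(\beta,\sigma^2\Sigma)$; $\Delta$ diagonal with $\Delta\succeq\Sigma$; $\omega\sim\mathcal N_d(0,\sigma^2(\Delta-\Sigma))$ independent of $\widehat\beta$; $\widetilde\beta=\widehat\beta+\omega$; $\xi=\Sigma^{-1}\widehat\beta-\Delta^{-1}\widetilde\beta$. A knockoff procedure at level $\alpha$ (with this $\Delta$) is a rule that, as a function of $(\xi,|\widetilde\beta|)$ (possibly also of $\beta,\sigma^2$ and independent auxiliary randomness), outputs an ordering $[1],\dots,[d]$ and signs $\psi_j\in\{\pm1\}$; $\widetilde p_j=1/2$ if $\operatorname{sgn}(\widetilde\beta_j)=\psi_j$, else $1$; $\widehat{\mathrm{FDP}}_k=\frac{1+\#\{j\le k:\widetilde p_{[j]}=1\}}{\#\{j\le k:\widetilde p_{[j]}=1/2\}}$; $\hat k=\max\{k:\widehat{\mathrm{FDP}}_k\le\alpha\}$ ($0$ if none); rejections are the $H_{[j]}$, $j\le\hat k$, with $\widetilde p_{[j]}=1/2$; $R$ is their number. Log-odds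 $\eta_j=\frac{2|\widetilde\beta_j||\beta_j|}{\sigma^2\Delta_{jj}}$, with order statistics $\eta_{(1)}\ge\dots\ge\eta_{(d)}$. For $0<p<q<1$, the random walk $S_k^{p,q}=\sum_{j=1}^k(p-Z_j)$ with $Z_1,Z_2,\dots$ i.i.d. $\mathrm{Bernoulli}(q)$, and $M_d^{p,q}=\max\{k\le d:S_k^{p,q}\ge 1-p\}$ (taken to be $0$ if the set is empty). *)

From HB Require Import structures.
From mathcomp Require Import all_boot all_order all_algebra all_fingroup.
From mathcomp Require Import all_classical all_reals all_analysis.
Set Implicit Arguments. Unset Strict Implicit. Unset Printing Implicit Defensive.
Import Order.TTheory GRing.Theory Num.Theory.
Local Open Scope ring_scope.

Section KnockoffDefs.
Variable R : realType.
Variable d : nat.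

(* Conditional (on (xi, |beta~|)) law of the sign of beta~_j.
   With a := beta_j |beta~_j| / (sigma^2 Delta_jj), beta~_j is positive (true)
   with probability e^a/(e^a+e^-a) and negative (false) otherwise. *)
Definition sign_prob (a : R) (s : bool) : R :=
  (if s then expR a else expR (- a)) / (expR a + expR (- a)).

(* exponent a_j; b_j stands for |beta~_j| and Delta_j for Delta_jj *)
Definition sign_exponent (beta b Delta : 'I_d -> R) (sigma2 : R) (j : 'I_d) : R :=
  beta j * b j / (sigma2 * Delta j).

Definition P_signs (beta b Delta : 'I_d -> R) (sigma2 : R)
    (s : {ffun 'I_d -> bool}) : R :=
  \prod_(j < d) sign_prob (sign_exponent beta b Delta sigma2 j) (s j).

Definition eta (beta b Delta : 'I_d -> R) (sigma2 : R) (j : 'I_d) : R :=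
  2 * b j * `|beta j| / (sigma2 * Delta j).

(* eta_(1) = largest log-odds (0 if d = 0; all eta_j >= 0) *)
Definition eta_max (beta b Delta : 'I_d -> R) (sigma2 : R) : R :=
  \big[Num.max/0]_(j < d) eta beta b Delta sigma2 j.

(* Knockoff filter.  The ordering [1],...,[d] is given by a permutation o:
   [i+1] = o i (0-indexed).  psi j = true means psi_j = +1.
   p~_[i+1] = 1/2 iff the sign of beta~_[i+1] equals psi_[i+1]. *)
Definition n_half (o : {perm 'I_d}) (psi s : {ffun 'I_d -> bool}) (k : nat) : nat :=
  #|[set i : 'I_d | (i < k)%N && (s (o i) == psi (o i))]|.
Definition n_one (o : {perm 'I_d}) (psi s : {ffun 'I_d -> bool}) (k : nat) : nat :=
  #|[set i : 'I_d | (i < k)%N && (s (o i) != psi (o i))]|.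

(* FDP^_k <= alpha, with the convention FDP^_k = +oo when the denominator is 0 *)
Definition fdp_le (alpha : R) o psi s (k : nat) : bool :=
  (1 + n_one o psi s k)%:R <= alpha * (n_half o psi s k)%:R.

Definition khat (alpha : R) o psi s : nat :=
  \max_(k < d.+1 | fdp_le alpha o psi s k) k.

Definition n_rej (alpha : R) o psi s : nat := n_half o psi s (khat alpha o psi s).

(* Random walk S_k^{p,q} = sum_{j<=k} (p - Z_j) for a Bernoulli path z *)
Definition walk (p : R) (z : {ffun 'I_d -> bool}) (k : nat) : R :=
  k%:R * p - (#|[set i : 'I_d | (i < k)%N && z i]|)%:R.

Definition Mwalk (p : R) (z : {ffun 'I_d -> bool}) : nat :=
  \max_(k < d.+1 | 1 - p <= walk p z k) k.

Definition P_bern (q : R) (z : {ffun 'I_d -> bool}) : R :=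
  \prod_(j < d) (if z j then q else 1 - q).

End KnockoffDefs.

From Pilot Require Import Defs.
From mathcomp Require Import all_boot all_order all_algebra all_fingroup.
From mathcomp Require Import all_classical all_reals all_analysis.
From mathcomp Require Import ring lra.
Set Implicit Arguments. Unset Strict Implicit. Unset Printing Implicit Defensive.
Import Order.TTheory GRing.Theory Num.Theory.
Local Open Scope ring_scope.

(* Fix the ordering and the signs psi, and let Z_i = [p~_[i+1] = 1].  If
   FDP^_k <= alpha then the walk S^p(Z) is at least 1 - p at k, and R <= k^,
   so R <= M_d^p(Z).  Conditionally on (xi, |beta~|) the signs are
   independent, hence so are the Z_i, with P(Z_i = 1) >= 1/(1 + e^{eta_j})
   >= q1.  As M_d^p is antitone in Z, the event {M_d^p >= t} is down-closed,
   so it becomes less likely when the success probabilities increase (change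
   them one coordinate at a time); hence P(R >= t) <= P(M_d^{p,q1} >= t).
   Averaging over a randomised rule (o, psi) preserves the bound. *)

Lemma ler_sum_subpred (R : numDomainType) (I : finType) (P Q : pred I)
    (F : I -> R) :
  (forall i, 0 <= F i) -> (forall i, P i -> Q i) ->
  \sum_(i | P i) F i <= \sum_(i | Q i) F i.
Proof.
move=> F_ge0 PQ; rewrite [leLHS]big_mkcond [leRHS]big_mkcond /=.
apply: ler_sum => i _; case: ifP => [/PQ -> //|_].
by case: ifP.
Qed.

Section IndependentBernoulli.
Variables (R : realFieldType) (d : nat).
Local Notation bits := {ffun 'I_d -> bool}.
Implicit Types (r : 'I_d -> R) (z : bits).

Definition P_indep r z : R := \prod_(j < d) (if z j then r j else 1 - r j).

Definition down_closed (f : pred bits) :=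
  forall z z', (forall i, z i ==> z' i) -> f z' -> f z.

Definition toggle (j0 : 'I_d) z : bits :=
  [ffun j => if j == j0 then ~~ z j else z j].

Lemma toggle_id j0 z : toggle j0 z j0 = ~~ z j0.
Proof. by rewrite ffunE eqxx. Qed.

Lemma toggle_neq j0 z j : j != j0 -> toggle j0 z j = z j.
Proof. by rewrite ffunE => /negbTE ->. Qed.

Lemma toggleK j0 : involutive (toggle j0).
Proof.
move=> z; apply/ffunP => j; have [->|j_neq] := eqVneq j j0.
  by rewrite !toggle_id negbK.
by rewrite !toggle_neq.
Qed.

Lemma sum_toggle_pairs j0 (F : bits -> R) :
  \sum_z F z = \sum_(z : bits | ~~ z j0) (F z + F (toggle j0 z)).
Proof.
rewrite big_split /= [LHS](bigID (fun z : bits => ~~ z j0)) /=; congr (_ + _).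
rewrite (reindex_inj (inv_inj (toggleK j0))) /=.
by apply: eq_bigl => z; rewrite toggle_id negbK.
Qed.

Lemma P_indepD1 r j0 z :
  P_indep r z = (if z j0 then r j0 else 1 - r j0)
                * \prod_(j | j != j0) (if z j then r j else 1 - r j).
Proof. exact: bigD1. Qed.

Lemma le_P_indep_down_closed_step f r r' j0 :
  down_closed f -> (forall j, 0 <= r j <= 1) ->
  (forall j, j != j0 -> r j = r' j) -> r' j0 <= r j0 ->
  \sum_(z | f z) P_indep r z <= \sum_(z | f z) P_indep r' z.
Proof.
move=> f_down r01 r_eq r'_le.
rewrite [leLHS]big_mkcond [leRHS]big_mkcond /=.
rewrite [leLHS](sum_toggle_pairs j0) [leRHS](sum_toggle_pairs j0).
apply: ler_sum => z /negbTE zj0.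
set Pi := \prod_(j | j != j0) (if z j then r j else 1 - r j).
have Pi_ge0 : 0 <= Pi.
  by apply: prodr_ge0 => j _; have /andP[] := r01 j; case: (z j) => *; lra.
have Pi_toggle c : \prod_(j | j != j0) (if toggle j0 z j then c j else 1 - c j)
                   = \prod_(j | j != j0) (if z j then c j else 1 - c j).
  by apply: eq_bigr => j /toggle_neq ->.
have Pi_r' : \prod_(j | j != j0) (if z j then r' j else 1 - r' j) = Pi.
  by apply: eq_bigr => j /r_eq ->.
have f_toggle : f (toggle j0 z) -> f z.
  apply: f_down => i; have [->|/toggle_neq ->] := eqVneq i j0; last exact: implybb.
  by rewrite zj0.
rewrite !(P_indepD1 _ j0) !Pi_toggle Pi_r' -/Pi toggle_id zj0 /=.
case fz1: (f (toggle j0 z)); first by rewrite (f_toggle fz1) /=; lra.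
by case: (f z) => /=; nra.
Qed.

Lemma le_P_indep_down_closed f r r' :
  down_closed f -> (forall j, 0 <= r j <= 1) -> (forall j, 0 <= r' j <= 1) ->
  (forall j, r' j <= r j) ->
  \sum_(z | f z) P_indep r z <= \sum_(z | f z) P_indep r' z.
Proof.
move=> f_down r01 r'01 r'_le.
pose mix k (j : 'I_d) := if (j < k)%N then r' j else r j.
have mix01 k j : 0 <= mix k j <= 1 by rewrite /mix; case: ifP.
suff mixP k : (k <= d)%N ->
    \sum_(z | f z) P_indep r z <= \sum_(z | f z) P_indep (mix k) z.
  have -> : r' = mix d by apply/funext => j; rewrite /mix ltn_ord.
  exact: mixP.
elim: k => [_|k IH lt_kd]; first exact: lexx.
apply: le_trans (IH (ltnW lt_kd)) _.
apply: (@le_P_indep_down_closed_step f _ _ (Ordinal lt_kd)) => // [j j_neq|].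
  have /negbTE j_neq_k : val j != k by exact: j_neq.
  by rewrite /mix ltnS [(j <= k)%N]leq_eqVlt j_neq_k.
by rewrite /mix /= leqnn ltnn.
Qed.

End IndependentBernoulli.

Lemma card_ord_lt d k : (#|[set i : 'I_d | (i < k)%N]| <= k)%N.
Proof.
rewrite cardE -(size_map val) -[leqRHS](size_iota 0 k).
apply: uniq_leq_size; first by rewrite map_inj_uniq ?enum_uniq //; apply: val_inj.
by move=> x /mapP[i]; rewrite mem_enum inE => lt_ik ->; rewrite mem_iota.
Qed.

Section SignProbabilities.
Variable R : realType.

Lemma sign_probN (a : R) (s : bool) : sign_prob a (~~ s) = 1 - sign_prob a s.
Proof.
have sum1 : sign_prob a true + sign_prob a false = 1.
  by rewrite /sign_prob -mulrDl divff // gt_eqF // addr_gt0 // expR_gt0.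
by case: s => /=; lra.
Qed.

Lemma sign_prob_ge (a m : R) (s : bool) :
  2 * `|a| <= m -> 1 / (1 + expR m) <= sign_prob a s.
Proof.
move=> le_am.
have := expR_gt0 a; have := expR_gt0 (- a); have := expR_gt0 m => em ena ea.
have norm_a := ler_norm a; have norm_Na := ler_norm (- a); rewrite normrN in norm_Na.
have le_Na : expR (- a) <= expR a * expR m by rewrite -expRD ler_expR; lra.
have le_a : expR a <= expR (- a) * expR m by rewrite -expRD ler_expR; lra.
rewrite /sign_prob ler_pdivrMr ?addr_gt0 // mulrC mulrA ler_pdivlMr ?addr_gt0 //.
case: s; nra.
Qed.

End SignProbabilities.

Section Knockoff.
Variables (R : realType) (d : nat).
Implicit Types (o : {perm 'I_d}) (psi s z : {ffun 'I_d -> bool}).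
Implicit Types (beta b Delta : 'I_d -> R).

(* [null_path o psi s i] is Z_{i+1} = [p~_[i+1] = 1]. *)
Definition null_path o psi s : {ffun 'I_d -> bool} :=
  [ffun i => s (o i) != psi (o i)].

Lemma null_path_inj o psi : injective (null_path o psi).
Proof.
move=> s1 s2 eq_s; apply/ffunP => j.
have := congr1 (fun z : {ffun 'I_d -> bool} => z ((o^-1)%g j)) eq_s.
by rewrite /= !ffunE permKV; case: (s1 j); case: (s2 j); case: (psi j).
Qed.

Lemma n_half_add_n_one_le o psi s k : (n_half o psi s k + n_one o psi s k <= k)%N.
Proof.
apply: leq_trans (card_ord_lt d k).
rewrite -(cardsID [set i : 'I_d | s (o i) == psi (o i)]) eq_leq //.
by congr (_ + _); apply: eq_card => i; rewrite !inE // andbC.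
Qed.

Lemma walk_null_path (p : R) o psi s k :
  walk p (null_path o psi s) k = k%:R * p - (n_one o psi s k)%:R.
Proof.
by rewrite /walk /n_one; congr (_ - _%:R); apply: eq_card => i; rewrite !inE ffunE.
Qed.

Lemma fdp_le_walk (alpha : R) o psi s k : 0 < alpha ->
  fdp_le alpha o psi s k ->
  1 - alpha / (1 + alpha) <= walk (alpha / (1 + alpha)) (null_path o psi s) k.
Proof.
move=> alpha_gt0; rewrite /fdp_le walk_null_path.
have := n_half_add_n_one_le o psi s k.
move: (n_half o psi s k) (n_one o psi s k) => H V le_HVk.
have {}le_HVk : H%:R + V%:R <= k%:R :> R by rewrite -natrD ler_nat.
rewrite natrD => fdp.
have alpha1_gt0 : 0 < 1 + alpha by lra.
rewrite -subr_ge0 -(pmulr_lge0 _ alpha1_gt0).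
have -> : (k%:R * (alpha / (1 + alpha)) - V%:R - (1 - alpha / (1 + alpha))) * (1 + alpha)
          = alpha * k%:R - V%:R * (1 + alpha) - 1 by field; rewrite gt_eqF.
nra.
Qed.

Lemma n_rej_le_Mwalk (alpha : R) o psi s : 0 < alpha ->
  (n_rej alpha o psi s <= Mwalk (alpha / (1 + alpha)) (null_path o psi s))%N.
Proof.
move=> alpha_gt0; apply: (@leq_trans (khat alpha o psi s)).
  exact: leq_trans (leq_addr _ _) (n_half_add_n_one_le _ _ _ _).
apply/bigmax_leqP => k fdp; apply: leq_bigmax_cond; exact: fdp_le_walk.
Qed.

Lemma Mwalk_antitone (p : R) z z' :
  (forall i, z i ==> z' i) -> (Mwalk p z' <= Mwalk p z)%N.
Proof.
move=> le_zz'; apply/bigmax_leqP => k walk_ge; apply: leq_bigmax_cond.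
apply: le_trans walk_ge _; rewrite /walk lerB // ler_nat; apply: subset_leq_card.
apply/fintype.subsetP => i; rewrite !inE => /andP[-> zi] /=.
by have := le_zz' i; rewrite zi.
Qed.

Lemma Mwalk_tail_down_closed (p : R) t : down_closed (fun z => (t <= Mwalk p z)%N).
Proof. by move=> z z' /(Mwalk_antitone p) le_M /leq_trans; apply. Qed.

Lemma P_signs_null_path beta b Delta (sigma2 : R) o psi s :
  P_signs beta b Delta sigma2 s =
  P_indep (fun i => sign_prob (sign_exponent beta b Delta sigma2 (o i)) (~~ psi (o i)))
          (null_path o psi s).
Proof.
rewrite /P_signs /P_indep (reindex_inj (@perm_inj _ o)) /=.
apply: eq_bigr => i _; rewrite ffunE.
by case: (s (o i)); case: (psi (o i)) => //=; rewrite -sign_probN.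
Qed.

Lemma eta_sign_exponent beta b Delta (sigma2 : R) j :
  0 < sigma2 -> 0 < Delta j -> 0 <= b j ->
  Defs.eta beta b Delta sigma2 j = 2 * `|sign_exponent beta b Delta sigma2 j|.
Proof.
move=> sigma2_gt0 Delta_gt0 b_ge0.
rewrite /Defs.eta /sign_exponent normf_div normrM (ger0_norm b_ge0).
by rewrite (gtr0_norm (mulr_gt0 sigma2_gt0 Delta_gt0)); ring.
Qed.

Lemma n_rej_tail_le (alpha sigma2 : R) beta b Delta o psi t :
  0 < alpha -> 0 < sigma2 -> (forall j, 0 < Delta j) -> (forall j, 0 <= b j) ->
  \sum_(s : {ffun 'I_d -> bool} | (t <= n_rej alpha o psi s)%N)
     P_signs beta b Delta sigma2 s
  <= \sum_(z : {ffun 'I_d -> bool} | (t <= Mwalk (alpha / (1 + alpha)) z)%N)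
       P_bern (1 / (1 + expR (eta_max beta b Delta sigma2))) z.
Proof.
move=> alpha_gt0 sigma2_gt0 Delta_gt0 b_ge0.
set p := alpha / (1 + alpha); set q1 := 1 / (1 + expR _).
set a := sign_exponent beta b Delta sigma2.
have q1_le j (e : bool) : q1 <= sign_prob (a j) e.
  by apply: sign_prob_ge; rewrite -eta_sign_exponent //; exact: le_bigmax.
have q1_ge0 : 0 <= q1 by rewrite divr_ge0 // addr_ge0 // ltW // expR_gt0.
have sign_prob01 j e : 0 <= sign_prob (a j) e <= 1.
  rewrite (le_trans q1_ge0 (q1_le j e)) -[e]negbK sign_probN lerBlDr lerDl.
  exact: le_trans q1_ge0 (q1_le j _).
pose q i := sign_prob (a (o i)) (~~ psi (o i)).
apply: (@le_trans _ _ (\sum_(s | (t <= Mwalk p (null_path o psi s))%N)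
                          P_signs beta b Delta sigma2 s)).
  apply: ler_sum_subpred => [s|s le_t_rej].
    by apply: prodr_ge0 => j _; case/andP: (sign_prob01 j (s j)).
  exact: leq_trans le_t_rej (n_rej_le_Mwalk _ _ _ alpha_gt0).
have -> : \sum_(s | (t <= Mwalk p (null_path o psi s))%N) P_signs beta b Delta sigma2 s
          = \sum_(z | (t <= Mwalk p z)%N) P_indep q z.
  rewrite [RHS](reindex_inj (@null_path_inj o psi)).
  by apply: eq_bigr => s _; exact: P_signs_null_path.
apply: (@le_P_indep_down_closed _ _ _ q (fun=> q1)) => [|i|i|i].
- exact: Mwalk_tail_down_closed.
- exact: sign_prob01.
- by rewrite q1_ge0 (le_trans (q1_le (o i) true)) //; case/andP: (sign_prob01 (o i) true).
- exact: q1_le.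
Qed.

End Knockoff.

Theorem proposition3 (R : realType) (d : nat) (alpha sigma2 : R)
    (beta b Delta : 'I_d -> R)
    (w : {perm 'I_d} * {ffun 'I_d -> bool} -> R) :
  0 < alpha -> alpha < 1 ->
  0 < sigma2 ->
  (forall j, 0 < Delta j) ->
  (forall j, 0 <= b j) ->
  (forall x, 0 <= w x) -> \sum_x w x = 1 ->
  eta_max beta b Delta sigma2 < - ln alpha ->
  let p := alpha / (1 + alpha) in
  let q1 := 1 / (1 + expR (eta_max beta b Delta sigma2)) in
  forall t : nat,
    \sum_x w x *
      (\sum_(s : {ffun 'I_d -> bool} | (t <= n_rej alpha x.1 x.2 s)%N)
          P_signs beta b Delta sigma2 s)
    <= \sum_(z : {ffun 'I_d -> bool} | (t <= Mwalk p z)%N) P_bern q1 z.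
Proof.
(* alpha < 1 and eta_(1) < -log alpha (equivalently p < q1) only make the
   walk drift downwards; the dominance holds without them. *)
move=> alpha_gt0 _ sigma2_gt0 Delta_gt0 b_ge0 w_ge0 w_sum1 _ p q1 t.
rewrite -[leRHS]mul1r -w_sum1 big_distrl /=.
apply: ler_sum => x _; apply: ler_wpM2l => //.
exact: n_rej_tail_le.
Qed.
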